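(* Let $R$ be a dp-minimal Noetherian integral domain with fraction field $K$, and suppose $R\neq K$. Let $\tilde{R}$ be the integral closure of $R$ in $K$. Then the $R$-adic topology on $K$ agrees with the $\tilde{R}$-adic topology on $K$. Moreover, there is $a\in K^\times$ such that $a\tilde{R}\subseteq R$.
   Context: Rings are commutative and unital; a ring is dp-minimal if $(R,+,\cdot)$ has dp-rank $1$. For a domain $A$ with fraction field $K\neq A$, the $A$-adic topology on $K$ is the ring topology on $K$ in which $\{aA : a\in K^\times\}$ is a neighborhood basis of $0$. *)

From mathcomp Require Import all_boot all_order all_algebra.
Set Implicit Arguments. Unset Strict Implicit. Unset Printing Implicit Defensive.
Import GRing.Theory.
Local Open Scope ring_scope.

Definition is_ideal (R : comRingType) (I : R -> Prop) : Prop :=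
  [/\ I 0, (forall x y, I x -> I y -> I (x + y)) & (forall r x, I x -> I (r * x))].

Definition fin_gen (R : comRingType) (I : R -> Prop) : Prop :=
  exists s : seq R, forall x, I x <->
    exists c : nat -> R, x = \sum_(i < size s) c i * s`_i.

Definition noetherian (R : comRingType) : Prop :=
  forall I : R -> Prop, is_ideal I -> fin_gen I.

(* First-order formulas in the ring language over R are GRing.formula R
   (constants from R allowed as parameters; Inv/Unit are definable in the
   ring language, so they add no expressive power).  Variable 'X_0 is the
   object variable x, the remaining variables are parameters, supplied by
   the environment a :: b.
   An ict-pattern of depth 2 (in the single variable x) consists of formulas
   phi(x;y), psi(x;z) and arrays (b_k), (c_l) such that for all i, j the type
   {phi(x,b_k)^(k=i), psi(x,c_l)^(l=j)} is consistent.  By compactness this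
   exists in the monster model iff for every n a finite n x n pattern exists,
   and (being existential) iff it exists in R itself.
   dp-minimal := dp-rank <= 1 := no ict-pattern of depth 2. *)
Definition ict2_pattern (R : unitRingType) (phi psi : GRing.formula R) (n : nat)
    (b c : nat -> seq R) : Prop :=
  forall i j, (i < n)%N -> (j < n)%N ->
    exists a : R,
      (forall k, (k < n)%N -> (GRing.holds (a :: b k) phi <-> k = i)) /\
      (forall l, (l < n)%N -> (GRing.holds (a :: c l) psi <-> l = j)).

Definition dp_minimal (R : unitRingType) : Prop :=
  ~ exists phi psi : GRing.formula R,
      forall n : nat, exists b c : nat -> seq R, ict2_pattern phi psi n b c.

Definition integral_over (R : idomainType) (K : fieldType) (f : {rmorphism R -> K})
    (x : K) : Prop :=
  exists p : {poly R}, p \is monic /\ root (map_poly f p) x.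

Definition image_ring (R : idomainType) (K : fieldType) (f : {rmorphism R -> K})
    (x : K) : Prop := exists r : R, x = f r.

(* Open sets of the A-adic topology on K: the group topology in which
   {a A : a in K^x} is a neighbourhood basis of 0. *)
Definition adic_open (K : fieldType) (A : K -> Prop) (U : K -> Prop) : Prop :=
  forall x, U x -> exists a : K, a != 0 /\ forall y, A y -> U (x + a * y).

(** Let [b] be a nonzero nonunit of [R] and let [c] be a nonzero common
    multiple of all differences [b^i - b^k], [i <> k < n].  For [p, q] in [R]
    consider the formula [y1 | x - y0] with parameters [(p b^k, q)] and
    [(q b^l, p)]: the element [p b^i + q b^j] satisfies exactly the instances
    [k = i] and [l = j], unless [q | c p] or [p | c q].  Since [R] is
    dp-minimal, no such ict-pattern exists for all [n], so for a suitable [c]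
    any two elements are comparable up to [c]: [R] is "almost" a valuation
    ring.  Now write an integral [x] as [p / q]: either [c^2 x] lies in [R],
    or [1 / x] lies in [R], and then integrality forces [x] itself into [R].
    Hence [c^2 R~ <= R <= R~], which gives both claims. *)

From mathcomp Require Import all_boot all_order all_algebra.
From mathcomp Require Import ring.
From Stdlib Require Import Classical.
Set Implicit Arguments. Unset Strict Implicit.
Import GRing.Theory.
Local Open Scope ring_scope.

Definition dvdr (R : comPzRingType) (d x : R) : Prop := exists m, x = d * m.

Lemma dvdr_refl (R : comPzRingType) (x : R) : dvdr x x.
Proof. by exists 1; rewrite mulr1. Qed.

Lemma dvdr_mulr (R : comPzRingType) (d x y : R) : dvdr d x -> dvdr d (x * y).
Proof. by move=> [m ->]; exists (m * y); rewrite mulrA. Qed.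

Lemma dvdr_addr (R : comPzRingType) (d x y : R) :
  dvdr d x -> dvdr d (x + y) -> dvdr d y.
Proof. by move=> [m ->] [m' e]; exists (m' - m); rewrite mulrBr -e addrC addKr. Qed.

Definition dvd_sub_formula (R : unitRingType) : GRing.formula R :=
  ('exists 'X_3, 'X_0 - 'X_1 == 'X_2 * 'X_3)%T.

Lemma holds_dvd_sub_formula (R : comUnitRingType) (x y0 y1 : R) :
  GRing.holds [:: x; y0; y1] (dvd_sub_formula R) <-> dvdr y1 (x - y0).
Proof. by []. Qed.

(* [b^i - b^k = b^i (1 - b^(k-i))] for [i < k], whence the factor [b^n]. *)
Definition powB_mult (R : comPzRingType) (n : nat) (b : R) : R :=
  b ^+ n * \prod_(d < n) (1 - b ^+ d.+1).

Lemma dvdr_powB_mult_lt (R : comPzRingType) (n i k : nat) (b : R) :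
  (i < k < n)%N -> dvdr (b ^+ i - b ^+ k) (powB_mult n b).
Proof.
move=> /andP[ik kn].
have dn : (k - i.+1 < n)%N by apply: leq_ltn_trans kn; apply: leq_subr.
have ek : b ^+ k = b ^+ i * b ^+ (k - i.+1).+1.
  by rewrite -exprD subnSK // subnKC // ltnW.
have en : b ^+ n = b ^+ i * b ^+ (n - i).
  by rewrite -exprD subnKC // ltnW // (ltn_trans ik kn).
rewrite /powB_mult (bigD1 (Ordinal dn)) //= en ek.
by exists (b ^+ (n - i) * \prod_(j < n | j != Ordinal dn) (1 - b ^+ j.+1)); ring.
Qed.

Lemma dvdr_powB_mult (R : comPzRingType) (n i k : nat) (b : R) :
  (i < n)%N -> (k < n)%N -> i != k -> dvdr (b ^+ i - b ^+ k) (powB_mult n b).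
Proof.
move=> ilt klt; rewrite neq_ltn => /orP[ik | ki].
  by apply: dvdr_powB_mult_lt; rewrite ik klt.
have [m ->] := dvdr_powB_mult_lt b (introT andP (conj ki ilt)).
by exists (- m); ring.
Qed.

Lemma powB_mult_neq0 (R : idomainType) (n : nat) (b : R) :
  b != 0 -> b \notin GRing.unit -> powB_mult n b != 0.
Proof.
move=> b0 bU; rewrite mulf_neq0 ?expf_neq0 //.
apply/prodf_neq0 => d _; rewrite subr_eq0; apply: contra bU => /eqP b1.
by apply/unitrPr; exists (b ^+ d); rewrite b1 exprS.
Qed.

Lemma dvd_sub_pattern_row (R : comUnitRingType) (n i j k : nat) (b p q : R) :
  (i < n)%N -> (k < n)%N -> ~ dvdr q (powB_mult n b * p) ->
  dvdr q (p * b ^+ i + q * b ^+ j - p * b ^+ k) <-> k = i.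
Proof.
move=> ilt klt qNcp; split => [qdiv | ->]; last first.
  by rewrite addrAC subrr add0r; apply: dvdr_mulr; apply: dvdr_refl.
apply/eqP; apply: contraT => ki; exfalso; apply: qNcp.
have qdivp : dvdr q (p * (b ^+ i - b ^+ k)).
  apply: (@dvdr_addr _ _ (q * b ^+ j)); first exact/dvdr_mulr/dvdr_refl.
  by move: qdiv; congr dvdr; ring.
have [m ->] : dvdr (b ^+ i - b ^+ k) (powB_mult n b).
  by apply: dvdr_powB_mult; rewrite // eq_sym.
by rewrite (_ : _ * p = p * (b ^+ i - b ^+ k) * m); [apply: dvdr_mulr | ring].
Qed.

Lemma ict2_pattern_of_incomparable (R : comUnitRingType) (n : nat) (b p q : R) :
  ~ dvdr q (powB_mult n b * p) -> ~ dvdr p (powB_mult n b * q) ->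
  ict2_pattern (dvd_sub_formula R) (dvd_sub_formula R) n
    (fun k => [:: p * b ^+ k; q]) (fun l => [:: q * b ^+ l; p]).
Proof.
move=> qNcp pNcq i j ilt jlt.
exists (p * b ^+ i + q * b ^+ j); split => k klt; rewrite holds_dvd_sub_formula.
  exact: (dvd_sub_pattern_row j ilt klt qNcp).
by rewrite [p * _ + _]addrC; apply: (dvd_sub_pattern_row i jlt klt pNcq).
Qed.

Lemma dp_minimal_bounded_ict2 (R : unitRingType) (phi psi : GRing.formula R) :
  dp_minimal R -> exists n, forall b c, ~ ict2_pattern phi psi n b c.
Proof.
move=> dpR; apply: NNPP => noBound; apply: dpR; exists phi, psi => n.
apply: NNPP => noPat; apply: noBound; exists n => b c pat.
by apply: noPat; exists b, c.
Qed.

Lemma dp_minimal_comparable (R : idomainType) (b : R) :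
  b != 0 -> b \notin GRing.unit -> dp_minimal R ->
  exists2 c : R, c != 0 & forall p q, dvdr q (c * p) \/ dvdr p (c * q).
Proof.
move=> b0 bU /(dp_minimal_bounded_ict2 (dvd_sub_formula R) (dvd_sub_formula R)).
move=> [n noPat]; exists (powB_mult n b); first exact: powB_mult_neq0.
move=> p q; apply: NNPP => /not_or_and[qNcp pNcq].
exact: noPat _ _ (ict2_pattern_of_incomparable qNcp pNcq).
Qed.

Lemma monic_root_inv (K : comNzRingType) (P : {poly K}) (x u : K) :
  P \is monic -> root P x -> x * u = 1 ->
  x = - \sum_(i < (size P).-1) P`_i * u ^+ ((size P).-1 - i.+1).
Proof.
move=> /monicP lcP /eqP rootP xu; set n := (size P).-1; set w := \sum_(i < n) _.
have sizeP : size P = n.+1 by rewrite prednK // size_poly_gt0 -lead_coef_eq0 lcP oner_neq0.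
have Pn : P`_n = 1 by rewrite -lcP lead_coefE.
have uw : u * w + 1 = 0. (* this is [u^n * P.[x]] *)
  rewrite -(mul0r (u ^+ n)) -rootP horner_coef sizeP big_ord_recr /= Pn mul1r.
  rewrite mulrDl -exprMn xu expr1n mulr_suml mulr_sumr; congr (_ + _).
  apply: eq_bigr => i _.
  have -> : u ^+ n = u ^+ i * u ^+ (n - i.+1).+1 by rewrite -exprD subnSK // subnKC // ltnW.
  rewrite (_ : _ * _ * _ = P`_i * (x * u) ^+ i * (u * u ^+ (n - i.+1))).
    by rewrite xu expr1n; ring.
  by rewrite exprMn exprS; ring.
have : x * (u * w + 1) = x + w by rewrite mulrDr mulrA xu mul1r mulr1 addrC.
by rewrite uw mulr0 => /esym/eqP; rewrite addr_eq0 => /eqP.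
Qed.

Lemma integral_inv_in_image (R : idomainType) (K : fieldType) (f : {rmorphism R -> K})
    (s : R) (x : K) :
  integral_over f x -> x * f s = 1 -> image_ring f x.
Proof.
move=> [P [monP rootP]] xs.
have sizeP : size (map_poly f P) = size P.
  by rewrite size_map_poly_id0 // (monicP monP) rmorph1 oner_neq0.
have := monic_root_inv (monic_map f monP) rootP xs; rewrite sizeP => ->.
exists (- \sum_(i < (size P).-1) P`_i * s ^+ ((size P).-1 - i.+1)).
rewrite rmorphN rmorph_sum; congr (- _).
by apply: eq_bigr => i _; rewrite coef_map rmorphM rmorphXn.
Qed.

Lemma image_ring_integral (R : idomainType) (K : fieldType) (f : {rmorphism R -> K})
    (x : K) :
  image_ring f x -> integral_over f x.
Proof.
move=> [r ->]; exists ('X - r%:P); split; first exact: monicXsubC.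
by rewrite map_polyXsubC root_XsubC.
Qed.

Lemma frac_exists_nonunit (R : idomainType) (K : fieldType) (f : {rmorphism R -> K}) :
  (forall x : K, exists a b : R, b != 0 /\ x = f a / f b) ->
  (exists x : K, forall r : R, f r != x) ->
  exists2 b : R, b != 0 & b \notin GRing.unit.
Proof.
move=> f_frac [x fNx]; have [a [b [b0 ex]]] := f_frac x.
exists b => //; apply/negP => bU; have := fNx (a / b).
by rewrite rmorphM rmorphV // ex eqxx.
Qed.

Lemma comparable_integral_in_image (R : idomainType) (K : fieldType)
    (f : {rmorphism R -> K}) (c : R) (x : K) :
  injective f -> (forall y : K, exists a b : R, b != 0 /\ y = f a / f b) ->
  c != 0 -> (forall p q, dvdr q (c * p) \/ dvdr p (c * q)) ->
  integral_over f x -> image_ring f (f (c * c) * x).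
Proof.
move=> f_inj f_frac c0 cmp; have [p [q [q0 ->]]] := f_frac x => xint.
have [-> | p0] := eqVneq p 0; first by exists 0; rewrite !rmorph0 mul0r mulr0.
have fq0 : f q != 0 by rewrite (raddf_eq0 _ f_inj).
have [[s cps] | [s cqs]] := cmp (c * p) q.
  by exists s; rewrite mulrA -rmorphM -mulrA cps rmorphM mulrAC divff // mul1r.
have qps : q = p * s by apply: (mulfI c0); rewrite mulrA.
have fs0 : f s != 0.
  by rewrite (raddf_eq0 _ f_inj); apply: contraNneq q0 => s0; rewrite qps s0 mulr0.
have [r ->] : image_ring f (f p / f q).
  apply: (integral_inv_in_image (s := s)) => //.
  by rewrite qps rmorphM invfM mulrA divff ?mul1r ?mulVf // (raddf_eq0 _ f_inj).
by exists (c * c * r); rewrite [RHS]rmorphM.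
Qed.

Lemma adic_open_commensurable (K : fieldType) (A B : K -> Prop) (a : K) :
  a != 0 -> (forall x, A x -> B x) -> (forall x, B x -> A (a * x)) ->
  forall U, adic_open A U <-> adic_open B U.
Proof.
move=> a0 AB BaA U; split=> openU x /openU[e [e0 eU]].
  exists (e * a); split; first by rewrite mulf_neq0.
  by move=> y /BaA Aay; rewrite -mulrA; apply: eU.
by exists e; split=> // y /AB; apply: eU.
Qed.

Theorem lemma8p5 (R : idomainType) (K : fieldType) (f : {rmorphism R -> K})
  (f_inj : injective f)
  (f_frac : forall x : K, exists a b : R, b != 0 /\ x = f a / f b)
  (hR_noeth : noetherian R)
  (hR_dp : dp_minimal R)
  (hRK : exists x : K, forall r : R, f r != x) :
  (forall U : K -> Prop,
      adic_open (image_ring f) U <-> adic_open (integral_over f) U) /\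
  (exists a : K, a != 0 /\
      forall x : K, integral_over f x -> image_ring f (a * x)).
Proof.
have [b b0 bU] := frac_exists_nonunit f_frac hRK.
have [c c0 cmp] := dp_minimal_comparable b0 bU hR_dp.
have cint := comparable_integral_in_image f_inj f_frac c0 cmp.
have fcc0 : f (c * c) != 0 by rewrite (raddf_eq0 _ f_inj) mulf_neq0.
split; last by exists (f (c * c)).
exact: adic_open_commensurable fcc0 (@image_ring_integral _ _ f) cint.
Qed.
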